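(* Let $q$ be a prime power, $\mathbb{F}:=\mathbb{F}_q$, $\alpha\in\mathbb{F}$ with $\mathrm{ord}(\alpha)=n$, $0\leq\delta\leq n-1$, $A:=\mathbb{F}[x]/\langle x^n-1\rangle$, and let $\sigma\in\mathrm{Aut}_{\mathbb{F}}(A)$ be defined by $\sigma(x)=\alpha x$. Let $\mathcal{C}:=\mathrm{im}\,G\subseteq\mathbb{F}[z]^n$ where $G:=\sum_{\nu=0}^{\delta}z^\nu\begin{pmatrix}1&\alpha^\nu&\alpha^{2\nu}&\ldots&\alpha^{(n-1)\nu}\end{pmatrix}$. Then: (a) $\mathfrak{p}(\mathcal{C})$ is the left ideal in $A[z;\sigma]$ generated by the element \[ \sum_{\nu=0}^{\delta}z^\nu\sum_{i=0}^{n-1}\alpha^{\nu i}x^i=\prod_{i=1}^{n-1}(x-\alpha^i)\sum_{\nu=0}^{\delta}z^\nu; \] (b) $\mathfrak{p}(\mathcal{C})$ is the left ideal in $A[z;\sigma]$ generated by the element \[ \varepsilon_0\sum_{\nu=0}^{\delta}z^\nu=\varepsilon_0(1+z\varepsilon_{n-1})(1+z\varepsilon_{n-2})\cdots(1+z\varepsilon_{n-\delta}) \] (the product being empty, i.e. equal to $1$, when $\delta=0$).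
   Context: $\mathrm{ord}(\alpha)$ is the multiplicative order of $\alpha$. For $\sigma\in\mathrm{Aut}_{\mathbb{F}}(A)$, the skew polynomial ring $A[z;\sigma]$ is the set of polynomials $\sum_\nu z^\nu a_\nu$ ($a_\nu\in A$) with usual addition and multiplication determined by associativity, distributivity, the multiplication of $A$, and the rule $az=z\sigma(a)$ for $a\in A$. The map $\mathfrak{p}:\mathbb{F}[z]^n\to A[z;\sigma]$ is $\sum_\nu z^\nu v_\nu\mapsto\sum_\nu z^\nu\sum_{i=0}^{n-1}v_{\nu,i}x^i$ for $v_\nu=(v_{\nu,0},\ldots,v_{\nu,n-1})\in\mathbb{F}^n$. For $k=0,\ldots,n-1$, $\varepsilon_k\in A$ is the primitive idempotent corresponding to the factor $x-\alpha^k$ of $x^n-1=\prod_{i=0}^{n-1}(x-\alpha^i)$, i.e. the unique element of $A$ with $\varepsilon_k(\alpha^i)=\delta_{k,i}$ for $i=0,\ldots,n-1$ (evaluation of a representative). *)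

From HB Require Import structures.
From mathcomp Require Import all_boot all_order all_algebra.
Set Implicit Arguments. Unset Strict Implicit. Unset Printing Implicit Defensive.
Import GRing.Theory.
Local Open Scope ring_scope.

Notation cycA F n := {poly %/ ('X^n - 1 : {poly F})}.

Section Skew.
Variables (F : fieldType) (n : nat) (a : F).

Definition sigmaA (f : cycA F n) : cycA F n :=
  in_qpoly ('X^n - 1) ((f : {poly F}) \Po (a *: 'X)).

(* The skew polynomial ring A[z; sigma]: an element  sum_nu z^nu a_nu
   is represented by the (ordinary) polynomial  P : {poly A}  with
   P`_nu = a_nu.  Multiplication is determined by  a z = z sigma(a),
   i.e.  (z^i a)(z^j b) = z^(i+j) sigma^j(a) b. *)
Definition skmul (P Q : {poly cycA F n}) : {poly cycA F n} :=
  \poly_(k < (size P + size Q).-1)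
     \sum_(i < k.+1) iter (k - i) sigmaA (P`_i) * Q`_(k - i).

Definition left_ideal_gen (g : {poly cycA F n}) : {poly cycA F n} -> Prop :=
  fun P => exists r : {poly cycA F n}, P = skmul r g.

Definition pfrak (v : 'rV[{poly F}]_n) : {poly cycA F n} :=
  \poly_(nu < \sum_(i < n) size (v ord0 i))
     in_qpoly ('X^n - 1) (\sum_(i < n) (v ord0 i)`_nu *: 'X^i).

End Skew.

Definition genG (F : fieldType) (n : nat) (a : F) (delta : nat)
  : 'M[{poly F}]_(1, n) :=
  \matrix_(j < 1, i < n) \sum_(nu < delta.+1) (a ^+ (nu * i)) *: 'X^nu.

Definition codeC (F : fieldType) (n : nat) (a : F) (delta : nat)
  : 'rV[{poly F}]_n -> Prop :=
  fun v => exists u : 'M[{poly F}]_(1, 1), v = u *m genG n a delta.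

(* epsilon_k : the unique element of A with eps_k(a^i) = delta_{k,i}
   for i = 0..n-1 (evaluation of the canonical representative). *)
Definition epsA (F : finFieldType) (n : nat) (a : F) (k : nat) : cycA F n :=
  odflt 0 [pick e : cycA F n |
             [forall i : 'I_n, (e : {poly F}).[a ^+ i] == (i == k :> nat)%:R]].

Arguments sigmaA {F} n a f.
Arguments skmul {F} n a P Q.
Arguments left_ideal_gen {F} n a g _.
Arguments pfrak {F} n v.
Arguments genG {F} n a delta.
Arguments codeC {F} n a delta v.
Arguments epsA {F} n a k.

(* Evaluation at [a ^+ t], [t < n], identifies [A] with [F ^ n] (the
   [a ^+ t] are the [n] distinct roots of ['X^n - 1]), and [sigma] becomes the
   shift [evA t \o sigma = evA t.+1].  The image [g_nu] in [A] of the row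
   [(a ^+ (nu * i))_i] of [G] evaluates to [n * (n %| t + nu)], i.e.
   [g_nu = n sigma^nu(eps_0)]; hence [sigma^nu(f) g_nu = f(1) g_nu] for all
   [f : A].  So the [z^k]-coefficient of a left multiple [r * sum_nu z^nu c g_nu]
   is [sum_j (c r_j(1)) g_(k-j)], the [z^k]-coefficient of [p(uG)] with
   [u_j = c r_j(1)]; conversely [p(uG)] is obtained from the constants
   [r_j = u_j / c].  Both generators have this shape, with [c = 1] and
   [c = 1/n].  The product formula in (b) follows from
   [eps_(n-j) = sigma^j(eps_0)] and the orthogonality of the idempotents. *)

From HB Require Import structures.
From mathcomp Require Import all_boot all_order all_algebra zify.
Import GRing.Theory.
Local Open Scope ring_scope.
Set Implicit Arguments. Unset Strict Implicit.

Lemma mk_monic_Xn_sub1 (R : nzRingType) n : (0 < n)%N ->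
  mk_monic ('X^n - 1 : {poly R}) = 'X^n - 1.
Proof. by move=> n_gt0; rewrite /mk_monic size_XnsubC // ltnS n_gt0 monicXnsubC. Qed.

Section Coefficients.
Variables (F : fieldType) (n : nat) (a : F).
Local Notation A := (cycA F n).
Local Notation sig j := (iter j (sigmaA n a)).

Lemma sigmaA0 : sigmaA n a 0 = 0.
Proof. by rewrite /sigmaA comp_poly0 in_qpoly0. Qed.

Lemma iter_sigmaA0 j : sig j (0 : A) = 0.
Proof. by elim: j => //= j ->; rewrite sigmaA0. Qed.

Lemma coef_skmul (P Q : {poly A}) k :
  (skmul n a P Q)`_k = \sum_(i < k.+1) sig (k - i) P`_i * Q`_(k - i).
Proof.
rewrite /skmul coef_poly; case: ltnP => // k_big; symmetry.
apply: big1 => -[i /= i_le_k] _.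
have [P_i0|i_lt] := leqP (size P) i; first by rewrite nth_default // iter_sigmaA0 mul0r.
rewrite [Q`_ _]nth_default ?mulr0 //.
by move: k_big i_lt; rewrite -subn1; move: (size P) (size Q) => sP sQ; lia.
Qed.

Lemma coef_skmulCl (c : A) (Q : {poly A}) k :
  (skmul n a c%:P Q)`_k = sig k c * Q`_k.
Proof.
rewrite coef_skmul big_ord_recl subn0 coefC eqxx big1 ?addr0 // => i _.
by rewrite coefC iter_sigmaA0 mul0r.
Qed.

Lemma skmul_polyC_poly1 (c : A) : skmul n a c%:P (\poly_(nu < 1) 1) = c%:P.
Proof.
apply/polyP => k; rewrite coef_skmulCl coef_poly coefC.
by case: k => [|k]; rewrite ?mulr1 ?mulr0.
Qed.

Lemma coef_skmul_1addXC (P : {poly A}) (s : A) k :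
  (skmul n a P (1 + 'X * s%:P))`_k =
  P`_k + (if k is k'.+1 then sigmaA n a P`_k' * s else 0).
Proof.
rewrite coef_skmul big_ord_recr /= subnn coefD coef1 coefXM /= addr0 mulr1 addrC.
congr (_ + _); case: k => [|k]; first by rewrite big_ord0.
rewrite big_ord_recr /= subSnn coefD coef1 coefXM /= coefC /= add0r.
rewrite big1 ?add0r // => i _.
have i_lt := ltn_ord i.
rewrite coefD coef1 coefXM coefC.
have -> : (k.+1 - i == 0)%N = false by apply/eqP; lia.
have -> : ((k.+1 - i).-1 == 0)%N = false by apply/eqP; lia.
by rewrite addr0 mulr0.
Qed.

Lemma coef_pfrak (v : 'rV[{poly F}]_n) k :
  (pfrak n v)`_k = in_qpoly ('X^n - 1) (\sum_(i < n) (v ord0 i)`_k *: 'X^i).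
Proof.
rewrite /pfrak coef_poly; case: ltnP => // k_big.
rewrite big1 ?in_qpoly0 // => i _; rewrite nth_default ?scale0r //.
by apply: leq_trans k_big; rewrite (bigD1 i) //= leq_addr.
Qed.

End Coefficients.

Section Evaluation.
Variables (F : fieldType) (n : nat) (a : F).
Hypothesis a_prim : n.-primitive_root a.

Local Notation A := (cycA F n).
Local Notation pp := ('X^n - 1 : {poly F}).
Local Notation sig j := (iter j (sigmaA n a)).

Let n_gt0 : (0 < n)%N := prim_order_gt0 a_prim.

Definition evA (t : nat) (f : A) : F := (f : {poly F}).[a ^+ t].

Lemma evA_in_qpoly t (p : {poly F}) : evA t (in_qpoly pp p) = p.[a ^+ t].
Proof.
have root_pp : pp.[a ^+ t] = 0.
  rewrite hornerD hornerN hornerXn hornerC exprAC (prim_expr_order a_prim).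
  by rewrite expr1n subrr.
rewrite /evA /= {2}(Pdiv.RingMonic.rdivp_eq (monic_mk_monic pp) p).
by rewrite mk_monic_Xn_sub1 // hornerD hornerM root_pp mulr0 add0r.
Qed.

Fact evA_is_zmod_morphism t : GRing.zmod_morphism (evA t).
Proof. by move=> f g; rewrite /evA raddfB hornerD hornerN. Qed.

Fact evA_is_monoid_morphism t : GRing.monoid_morphism (evA t).
Proof.
split; first by rewrite /evA /= hornerC.
by move=> f g; rewrite -[f * g]/(in_qpoly pp ((f : {poly F}) * g)) evA_in_qpoly hornerM.
Qed.

HB.instance Definition _ t :=
  GRing.isZmodMorphism.Build A F (evA t) (evA_is_zmod_morphism t).
HB.instance Definition _ t :=
  GRing.isMonoidMorphism.Build A F (evA t) (evA_is_monoid_morphism t).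

Lemma evAZ t c (f : A) : evA t (c *: f) = c * evA t f.
Proof. by rewrite /evA poly_of_qpolyZ hornerZ. Qed.

Lemma evA_mod t (f : A) : evA (t %% n) f = evA t f.
Proof. by rewrite /evA (prim_expr_mod a_prim). Qed.

Lemma evA_sigmaA t (f : A) : evA t (sigmaA n a f) = evA t.+1 f.
Proof. by rewrite evA_in_qpoly horner_comp hornerZ hornerX -exprS. Qed.

Lemma evA_iter_sigmaA t j (f : A) : evA t (sig j f) = evA (t + j) f.
Proof.
elim: j t => [|j IH] t /=; first by rewrite addn0.
by rewrite evA_sigmaA IH addSnnS.
Qed.

Lemma evA_inj (f g : A) : (forall t, (t < n)%N -> evA t f = evA t g) -> f = g.
Proof.
move=> eq_fg; apply: val_inj; apply/eqP; rewrite -subr_eq0; apply/eqP.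
set d := _ - _; apply/eqP/negPn/negP => d_neq0.
pose roots := mkseq (fun i => a ^+ i) n.
have roots_d : all (root d) roots.
  apply/allP => x /mapP [i]; rewrite mem_iota => /andP [_ i_lt] ->.
  by rewrite /root /d hornerD hornerN -!/(evA i _) eq_fg // subrr.
have uniq_roots : uniq roots.
  rewrite map_inj_in_uniq ?iota_uniq // => i j.
  rewrite !mem_iota => /andP [_ i_lt] /andP [_ j_lt] /eqP.
  by rewrite (eq_prim_root_expr a_prim) !modn_small // => /eqP.
have size_A (h : A) : (size (h : {poly F}) <= n)%N.
  rewrite -ltnS (leq_trans (size_mk_monic h)) //.
  by rewrite mk_monic_Xn_sub1 // -polyC1 size_XnsubC.
have := max_poly_roots d_neq0 roots_d uniq_roots; rewrite size_mkseq ltnNge.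
by rewrite (leq_trans (size_polyD _ _)) // geq_max size_polyN !size_A.
Qed.

Lemma sum_prim_root_exp s :
  \sum_(i < n) (a ^+ s) ^+ i = (n %| s)%:R * n%:R.
Proof.
have [n_dvd_s|n_ndvd_s] := boolP (n %| s)%N.
  rewrite mul1r -(prim_expr_mod a_prim) (eqP n_dvd_s) expr0.
  by rewrite (eq_bigr (fun _ => 1)) ?sumr_const ?card_ord // => i _; rewrite expr1n.
have as_neq1 : a ^+ s - 1 != 0.
  rewrite subr_eq0 -(expr0 a) (eq_prim_root_expr a_prim) mod0n.
  by apply: contra n_ndvd_s.
have : (a ^+ s) ^+ n - 1 = 0 by rewrite exprAC (prim_expr_order a_prim) expr1n subrr.
by rewrite subrX1 mul0r => /eqP; rewrite mulf_eq0 (negbTE as_neq1) => /eqP.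
Qed.

Definition genrow (nu : nat) : A := in_qpoly pp (\sum_(i < n) a ^+ (nu * i) *: 'X^i).

Lemma evA_genrow t nu : evA t (genrow nu) = (n %| t + nu)%:R * n%:R.
Proof.
rewrite evA_in_qpoly horner_sum -sum_prim_root_exp; apply: eq_bigr => i _.
by rewrite hornerZ hornerXn -!exprM mulnDl exprD mulrC.
Qed.

Lemma genrow0 : genrow 0 = in_qpoly pp (\prod_(1 <= i < n) ('X - (a ^+ i)%:P)).
Proof.
congr in_qpoly; transitivity (\sum_(i < n) 'X^i : {poly F}).
  by apply: eq_bigr => i _; rewrite mul0n expr0 scale1r.
apply: (mulfI (negbT (polyXsubC_eq0 (1 : F)))).
by rewrite polyC1 -subrX1 -(factor_Xn_sub_1 a_prim) big_ltn // expr0 polyC1.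
Qed.

Lemma iter_sigmaA_scale_genrow j c nu : sig j (c *: genrow nu) = c *: genrow (nu + j).
Proof.
by apply: evA_inj => t _; rewrite evA_iter_sigmaA !evAZ !evA_genrow (addnC nu) addnA.
Qed.

(* [evA t (genrow m)] vanishes unless [n %| t + m], and then
   [evA t (sig m f) = evA 0 f]. *)
Lemma iter_sigmaA_mul_genrow m (f : A) : sig m f * genrow m = evA 0 f *: genrow m.
Proof.
apply: evA_inj => t _; rewrite rmorphM /= evAZ evA_iter_sigmaA evA_genrow.
have [n_dvd|] := boolP (n %| t + m)%N; last by rewrite !mul0r !mulr0.
by rewrite -evA_mod (eqP n_dvd).
Qed.

Variable delta : nat.

Definition codegen (c : F) : {poly A} := \poly_(nu < delta.+1) (c *: genrow nu).

Lemma codegen1 : codegen 1 = \poly_(nu < delta.+1) genrow nu.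
Proof. by apply: eq_poly => nu _; rewrite scale1r. Qed.

Lemma skmul_genrow0_sumz c :
  skmul n a (c *: genrow 0)%:P (\poly_(nu < delta.+1) 1) = codegen c.
Proof.
apply/polyP => k; rewrite coef_skmulCl !coef_poly.
by case: ifP => _; rewrite ?mulr0 // mulr1 iter_sigmaA_scale_genrow.
Qed.

Lemma coef_skmul_codegen (r : {poly A}) c k :
  (skmul n a r (codegen c))`_k =
  \sum_(j < k.+1)
     (if (k - j < delta.+1)%N then (c * evA 0 r`_j) *: genrow (k - j) else 0).
Proof.
rewrite coef_skmul; apply: eq_bigr => j _; rewrite coef_poly.
case: ifP => _; last by rewrite mulr0.
by rewrite -scalerAr iter_sigmaA_mul_genrow scalerA mulrC.
Qed.

Lemma coef_pfrak_code (u : 'M[{poly F}]_1) k :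
  (pfrak n (u *m genG n a delta))`_k =
  \sum_(j < k.+1)
     (if (k - j < delta.+1)%N then (u ord0 ord0)`_j *: genrow (k - j) else 0).
Proof.
rewrite coef_pfrak.
under eq_bigr => i _ do
  rewrite mxE big_ord1 mxE -(poly_def _ (fun nu => a ^+ (nu * i))) coefM scaler_suml.
rewrite exchange_big rmorph_sum; apply: eq_bigr => j _ /=.
under eq_bigr => i _ do rewrite coef_poly.
case: ifP => _; last by rewrite big1 ?in_qpoly0 // => i _; rewrite mulr0 scale0r.
rewrite /genrow -in_qpolyZ scaler_sumr; congr in_qpoly.
by apply: eq_bigr => i _; rewrite scalerA.
Qed.

Lemma pfrak_code_left_ideal c : c != 0 -> forall P,
  (exists v, codeC n a delta v /\ P = pfrak n v) <-> left_ideal_gen n a (codegen c) P.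
Proof.
move=> c_neq0 P; split.
  move=> [_ [[u ->] ->]]; set U := u ord0 ord0.
  exists (\poly_(j < size U) (U`_j / c)%:A).
  apply/polyP => k; rewrite coef_pfrak_code coef_skmul_codegen.
  apply: eq_bigr => j _; case: ifP => // _; congr (_ *: _); rewrite coef_poly.
  case: ltnP => [_|U_j0]; first by rewrite evAZ rmorph1 mulr1 mulrC divfK.
  by rewrite rmorph0 mulr0 nth_default.
move=> [r ->]; pose U := \poly_(j < size r) (c * evA 0 r`_j).
exists (U%:M *m genG n a delta); split; first by exists U%:M.
apply/polyP => k; rewrite coef_pfrak_code coef_skmul_codegen.
apply: eq_bigr => j _; case: ifP => // _; congr (_ *: _).
rewrite mxE mulr1n coef_poly; case: ltnP => // r_j0.
by rewrite nth_default // rmorph0 mulr0.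
Qed.

End Evaluation.

Arguments evA {F} n a t f : simpl never.
Arguments genrow {F} n a nu.
Arguments codegen {F} n a delta c.

Lemma dvdn_add_subn n k t : (t < n)%N -> (k < n)%N -> (n %| t + (n - k))%N = (t == k).
Proof.
move=> t_lt k_lt; have [t_lt_k|k_le_t] := ltnP t k.
  by rewrite /dvdn modn_small; [apply/eqP/eqP; lia | lia].
rewrite addnBA ?(ltnW k_lt) // addnC -addnBA // dvdn_addr // /dvdn modn_small; last lia.
by apply/eqP/eqP; lia.
Qed.

Section Idempotents.
Variables (F : finFieldType) (n : nat) (a : F).
Hypothesis a_prim : n.-primitive_root a.

Local Notation A := (cycA F n).
Local Notation sig j := (iter j (sigmaA n a)).
Local Notation eps := (epsA n a).
Local Notation sumz m := (\poly_(nu < m.+1) 1 : {poly A}).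

Let n_gt0 : (0 < n)%N := prim_order_gt0 a_prim.

Lemma evA_epsA k t : (k < n)%N -> (t < n)%N -> evA n a t (eps k) = (t == k)%:R.
Proof.
move=> k_lt t_lt; rewrite /epsA; case: pickP => [e /forallP e_spec | no_eps].
  exact/eqP/(e_spec (Ordinal t_lt)).
have n_neq0 := prim_root_natf_neq0 a_prim.
have /negbT/forallPn[s /eqP []] := no_eps (sig (n - k) (n%:R^-1 *: genrow n a 0)).
rewrite -[LHS]/(evA n a s _) evA_iter_sigmaA // evAZ // evA_genrow // addn0.
by rewrite mulrCA mulVf // mulr1 dvdn_add_subn.
Qed.

Lemma evA_epsA0 t : evA n a t (eps 0) = (n %| t)%:R.
Proof. by rewrite -evA_mod // evA_epsA ?ltn_mod. Qed.

Lemma epsA0E : eps 0 = n%:R^-1 *: genrow n a 0.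
Proof.
apply: (evA_inj a_prim) => t _.
rewrite evA_epsA0 evAZ evA_genrow // addn0 mulrCA mulVf ?mulr1 //.
exact: prim_root_natf_neq0 a_prim.
Qed.

Lemma epsA_iter_sigmaA0 j : (0 < j < n)%N -> eps (n - j) = sig j (eps 0).
Proof.
move=> /andP [j_gt0 j_lt]; apply: (evA_inj a_prim) => t t_lt.
have n_sub_j_lt : (n - j < n)%N by rewrite ltn_subrL j_gt0 n_gt0.
rewrite evA_epsA // evA_iter_sigmaA // evA_epsA0.
by rewrite -(dvdn_add_subn t_lt n_sub_j_lt) subKn // ltnW.
Qed.

Lemma iter_sigmaA_epsA0_mul i j : (i < n)%N -> (j < n)%N ->
  sig i (eps 0) * sig j (eps 0) = if i == j then sig j (eps 0) else 0.
Proof.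
move=> i_lt j_lt; case: eqP => [-> | i_neq_j].
  apply: (evA_inj a_prim) => t _; rewrite rmorphM /= evA_iter_sigmaA // evA_epsA0.
  by case: (n %| _)%N; rewrite ?mulr1 ?mulr0.
apply: (evA_inj a_prim) => t _.
rewrite rmorphM rmorph0 //= !evA_iter_sigmaA // !evA_epsA0.
have [ti|] := boolP (n %| t + i)%N; have [tj|] := boolP (n %| t + j)%N;
  rewrite ?mulr0 ?mul0r //.
have : (t + i == t + j %[mod n])%N.
  by rewrite /dvdn in ti tj; rewrite (eqP ti) (eqP tj).
by rewrite eqn_modDl !modn_small // => /eqP.
Qed.

Lemma skmul_epsA0_sumzS m : (m.+1 < n)%N ->
  skmul n a (skmul n a (eps 0)%:P (sumz m)) (1 + 'X * (eps (n - m.+1))%:P)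
  = skmul n a (eps 0)%:P (sumz m.+1).
Proof.
move=> m_lt; rewrite epsA_iter_sigmaA0 //; apply/polyP => k.
rewrite coef_skmul_1addXC !coef_skmulCl !coef_poly.
case: k => [|k]; first by rewrite addr0.
rewrite coef_skmulCl coef_poly !ltnS.
have mul_eps := iter_sigmaA_epsA0_mul _ m_lt.
case: ltngtP => [k_lt_m | m_lt_k | ->].
- rewrite !mulr1 -[sigmaA n a _]/(sig k.+1 _) mul_eps; last lia.
  by rewrite eqSS ltn_eqF // addr0.
- by rewrite !mulr0 sigmaA0 mul0r addr0.
- rewrite mulr0 add0r [sig m _ * 1]mulr1 mulr1 -[sigmaA n a _]/(sig m.+1 _).
  by rewrite mul_eps // eqxx.
Qed.

Lemma foldl_skmul_epsA0_sumz m d : (m + d < n)%N ->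
  foldl (skmul n a) (skmul n a (eps 0)%:P (sumz m))
        [seq 1 + 'X * (eps (n - j))%:P | j <- iota m.+1 d]
  = skmul n a (eps 0)%:P (sumz (m + d)).
Proof.
elim: d m => [|d IH] m md_lt /=; first by rewrite addn0.
by rewrite skmul_epsA0_sumzS ?IH -?addSnnS //; lia.
Qed.

End Idempotents.

Theorem theorem4p6 (F : finFieldType) (n : nat) (a : F) (delta : nat) :
  n.-primitive_root a -> (delta <= n.-1)%N ->
  let pC : {poly cycA F n} -> Prop :=
    fun P => exists v, codeC n a delta v /\ P = pfrak n v in
  let sumz : {poly cycA F n} := \poly_(nu < delta.+1) 1 in
  let ga : {poly cycA F n} :=
    \poly_(nu < delta.+1)
       in_qpoly ('X^n - 1) (\sum_(i < n) (a ^+ (nu * i)) *: 'X^i) in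
  let gb : {poly cycA F n} := skmul n a (epsA n a 0)%:P sumz in
  (* (a) *)
  (ga = skmul n a (in_qpoly ('X^n - 1)
                     (\prod_(1 <= i < n) ('X - (a ^+ i)%:P)))%:P sumz
   /\ (forall P, pC P <-> left_ideal_gen n a ga P))
  /\
  (* (b) *)
  (gb = foldl (skmul n a) (epsA n a 0)%:P
              [seq 1 + 'X * (epsA n a (n - j))%:P | j <- iota 1 delta]
   /\ (forall P, pC P <-> left_ideal_gen n a gb P)).
Proof.
move=> a_prim delta_lt pC sumz ga gb.
have n_gt0 := prim_order_gt0 a_prim.
have ga_codegen : ga = codegen n a delta 1 by rewrite codegen1.
have gb_codegen : gb = codegen n a delta n%:R^-1.
  by rewrite /gb (epsA0E a_prim) skmul_genrow0_sumz.
split; split.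
- by rewrite ga_codegen -genrow0 // -[genrow n a 0%N]scale1r skmul_genrow0_sumz.
- by move=> P; rewrite ga_codegen; apply: pfrak_code_left_ideal; rewrite ?oner_neq0.
- rewrite -(skmul_polyC_poly1 a) (foldl_skmul_epsA0_sumz a_prim) //; lia.
- move=> P; rewrite gb_codegen; apply: pfrak_code_left_ideal => //.
  exact/invr_neq0/(prim_root_natf_neq0 a_prim).
Qed.
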